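(* There is a first order formula $\theta(u,v)$ of the vocabulary $\{+,\cdot,+',\cdot'\}$ such that $P(+,\cdot,\{+',\cdot'\})\cup P(+',\cdot',\{+,\cdot\})\vdash \mathrm{ISOM}(+,\cdot,+',\cdot')$, where $\mathrm{ISOM}(+,\cdot,+',\cdot')$ is the first order sentence expressing that the relation defined by $\theta(u,v)$ is (the graph of) an isomorphism from the structure given by $+,\cdot$ onto the structure given by $+',\cdot'$ (i.e. it is a bijective function $\pi$ of the domain with $\pi(x+y)=\pi(x)+'\pi(y)$ and $\pi(x\cdot y)=\pi(x)\cdot'\pi(y)$ for all $x,y$).
   Context: $+,\cdot,+',\cdot'$ are binary function symbols. $P(+,\cdot)$ denotes the first order Peano axioms in the vocabulary $\{+,\cdot\}$, with Induction Schema $\forall x_1\ldots x_n((\phi(0,\bar x)\wedge\forall y(\phi(y,\bar x)\to\phi(y+1,\bar x)))\to\forall y\phi(y,\bar x))$, where $0$ and $1$ are defined terms denoting the identity elements of $+$ and $\cdot$. For a vocabulary $L$, $P(+,\cdot,L)$ denotes the extension of $P(+,\cdot)$ in which the Induction Schema is taken for all first order formulas of the vocabulary $\{+,\cdot\}\cup L$; $P(+',\cdot',L)$ is defined analogously for $\{+',\cdot'\}$. $\vdash$ is first order provability. *)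

From Stdlib Require Import List.
Import ListNotations.

Inductive fsym : Type := Add | Mul | Add' | Mul'.

Inductive term : Type :=
| var : nat -> term
| fn : fsym -> term -> term -> term.

(* de Bruijn formulas: [All phi] binds variable 0 of [phi]. *)
Inductive form : Type :=
| Eq : term -> term -> form
| Bot : form
| Imp : form -> form -> form
| All : form -> form.

Definition Neg (p : form) : form := Imp p Bot.
Definition And (p q : form) : form := Neg (Imp p (Neg q)).
Definition Ex (p : form) : form := Neg (All (Neg p)).
Fixpoint AllN (n : nat) (p : form) : form :=
  match n with 0 => p | S k => All (AllN k p) end.

Definition scons (t : term) (s : nat -> term) (n : nat) : term :=
  match n with 0 => t | S k => s k end.

Fixpoint subst_term (s : nat -> term) (t : term) : term :=
  match t with
  | var n => s n
  | fn f t1 t2 => fn f (subst_term s t1) (subst_term s t2)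
  end.

Definition shift : nat -> term := fun n => var (S n).

Definition up (s : nat -> term) : nat -> term :=
  scons (var 0) (fun n => subst_term shift (s n)).

Fixpoint subst_form (s : nat -> term) (p : form) : form :=
  match p with
  | Eq t1 t2 => Eq (subst_term s t1) (subst_term s t2)
  | Bot => Bot
  | Imp p q => Imp (subst_form s p) (subst_form s q)
  | All p => All (subst_form (up s) p)
  end.

Definition inst (t : term) (p : form) : form := subst_form (scons t var) p.

Fixpoint bounded_term (n : nat) (t : term) : Prop :=
  match t with
  | var k => k < n
  | fn _ t1 t2 => bounded_term n t1 /\ bounded_term n t2
  end.

Fixpoint bounded_form (n : nat) (p : form) : Prop :=
  match p with
  | Eq t1 t2 => bounded_term n t1 /\ bounded_term n t2
  | Bot => True
  | Imp p q => bounded_form n p /\ bounded_form n q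
  | All p => bounded_form (S n) p
  end.

Inductive nd : list form -> form -> Prop :=
| ndCtx A p : In p A -> nd A p
| ndII A p q : nd (p :: A) q -> nd A (Imp p q)
| ndIE A p q : nd A (Imp p q) -> nd A p -> nd A q
| ndAllI A p : nd (map (subst_form shift) A) p -> nd A (All p)
| ndAllE A p t : nd A (All p) -> nd A (inst t p)
| ndExp A p : nd A Bot -> nd A p
| ndPeirce A p q : nd A (Imp (Imp (Imp p q) p) p)
| ndRefl A t : nd A (Eq t t)
| ndLeib A s t p : nd A (Eq s t) -> nd A (inst s p) -> nd A (inst t p).

Definition provable (T : form -> Prop) (p : form) : Prop :=
  exists A : list form, (forall q, In q A -> T q) /\ nd A p.

(** * Peano axioms for a pair of symbols (a, m), with 0 and 1 defined
    as the (two-sided) identity elements of a and m respectively. *)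

Section Peano.
Variables a m : fsym.

Definition IsZero (z : term) : form :=
  All (And (Eq (fn a (var 0) (subst_term shift z)) (var 0))
           (Eq (fn a (subst_term shift z) (var 0)) (var 0))).
Definition IsOne (e : term) : form :=
  All (And (Eq (fn m (var 0) (subst_term shift e)) (var 0))
           (Eq (fn m (subst_term shift e) (var 0)) (var 0))).

(* [With01 body]: for all z, e, if z = 0 and e = 1 then body,
   where inside body var 1 denotes 0 and var 0 denotes 1. *)
Definition With01 (body : form) : form :=
  All (All (Imp (IsZero (var 1)) (Imp (IsOne (var 0)) body))).

Definition PA_zero : form := Ex (IsZero (var 0)).
Definition PA_one : form := Ex (IsOne (var 0)).
(* forall x, x + 1 <> 0      (x = var 0, 1 = var 1, 0 = var 2) *)
Definition PA_succ_nz : form :=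
  With01 (All (Neg (Eq (fn a (var 0) (var 1)) (var 2)))).
(* forall x y, x + 1 = y + 1 -> x = y   (x = 1, y = 0, 1 = var 2) *)
Definition PA_succ_inj : form :=
  With01 (All (All (Imp (Eq (fn a (var 1) (var 2)) (fn a (var 0) (var 2)))
                        (Eq (var 1) (var 0))))).
(* forall x y, x + (y + 1) = (x + y) + 1 *)
Definition PA_add_succ : form :=
  With01 (All (All (Eq (fn a (var 1) (fn a (var 0) (var 2)))
                       (fn a (fn a (var 1) (var 0)) (var 2))))).
(* forall x, x . 0 = 0     (x = var 0, 0 = var 2) *)
Definition PA_mul_zero : form :=
  With01 (All (Eq (fn m (var 0) (var 2)) (var 2))).
(* forall x y, x . (y + 1) = x . y + x *)
Definition PA_mul_succ : form :=
  With01 (All (All (Eq (fn m (var 1) (fn a (var 0) (var 2)))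
                       (fn a (fn m (var 1) (var 0)) (var 1))))).

(* Induction instance for a formula phi(y, x_1, ...) with y = var 0 and
   parameters var (i+1), closed off by n universal quantifiers:
   forall x1..xn ((phi(0,x) /\ forall y (phi(y,x) -> phi(y+1,x)))
                  -> forall y phi(y,x)). *)
Definition ind_at0 : nat -> term := scons (var 1) (fun k => var (k + 2)).
Definition ind_y : nat -> term := scons (var 0) (fun k => var (k + 3)).
Definition ind_y1 : nat -> term :=
  scons (fn a (var 0) (var 1)) (fun k => var (k + 3)).
Definition PA_ind (n : nat) (phi : form) : form :=
  AllN n (With01
    (Imp (And (subst_form ind_at0 phi)
              (All (Imp (subst_form ind_y phi) (subst_form ind_y1 phi))))
         (All (subst_form ind_y phi)))).

(* P(a, m, L): induction for all formulas of the full vocabulary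
   {+, ., +', .'} (every [form] is in this vocabulary). *)
Inductive Peano_ax : form -> Prop :=
| PAzero : Peano_ax PA_zero
| PAone : Peano_ax PA_one
| PAsnz : Peano_ax PA_succ_nz
| PAsinj : Peano_ax PA_succ_inj
| PAadd : Peano_ax PA_add_succ
| PAmul0 : Peano_ax PA_mul_zero
| PAmulS : Peano_ax PA_mul_succ
| PAind n phi : Peano_ax (PA_ind n phi).
End Peano.

(** * The sentence ISOM(+, ., +', .') for theta(u, v) (u = var 0, v = var 1) *)

Definition theta_at (theta : form) (s t : term) : form :=
  subst_form (scons s (scons t var)) theta.

(* ISOM theta is the conjunction of: total (forall u exists v theta(u,v)),
   functional, injective, surjective (forall v exists u theta(u,v)), and
   the homomorphism clause: theta(x,x') /\ theta(y,y') ->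
   theta(x+y, x'+'y') /\ theta(x.y, x'.'y')  (x=var 3, y=var 2, x'=var 1,
   y'=var 0 under four quantifiers). *)
Definition ISOM (theta : form) : form :=
  let T := theta_at theta in
  And 
    (All (Ex (T (var 1) (var 0))))
  (And 
    (All (All (All (Imp (And (T (var 2) (var 1)) (T (var 2) (var 0)))
                        (Eq (var 1) (var 0))))))
  (And 
    (All (All (All (Imp (And (T (var 2) (var 0)) (T (var 1) (var 0)))
                        (Eq (var 2) (var 1))))))
  (And 
    (All (Ex (T (var 0) (var 1))))
    
    (All (All (All (All
      (Imp (And (T (var 3) (var 1)) (T (var 2) (var 0)))
           (And (T (fn Add (var 3) (var 2)) (fn Add' (var 1) (var 0)))
                (T (fn Mul (var 3) (var 2)) (fn Mul' (var 1) (var 0)))))))))))).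

(* By the completeness theorem for this calculus (a Henkin construction), it suffices
   to show that theta defines an isomorphism in every model of both theories.
   There let 0, 1 and 0', 1' be the two pairs of identities.  theta(u, v) says that some
   sequence, coded by Goedel's beta function computed with + and ., starts with 0',
   satisfies s(i+1) = s(i) +' 1' for i < u, and ends with s(u) = v.  Both theories have
   induction for formulas of the whole vocabulary, so induction on u in the unprimed
   structure shows that theta is total, functional and injective and that it preserves
   + and . (by the recursion equations of +' and .'), while induction on v in the primed
   structure shows that it is surjective.  Appending one more entry to a coded sequence
   is the Chinese remainder theorem, proved inside the unprimed structure. *)

From Stdlib Require Import List Lia Arith FunctionalExtensionality PropExtensionality
  Classical ClassicalEpsilon ProofIrrelevance Cantor Ring.
Import ListNotations.

Definition subst_comp (s t : nat -> term) : nat -> term := fun k => subst_term t (s k).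

Lemma subst_term_comp s t u : subst_term t (subst_term s u) = subst_term (subst_comp s t) u.
Proof. induction u; cbn; [reflexivity|congruence]. Qed.

Lemma subst_term_ext s t u : (forall k, s k = t k) -> subst_term s u = subst_term t u.
Proof. intros H; induction u; cbn; [apply H|congruence]. Qed.

Lemma subst_term_id u : subst_term var u = u.
Proof. induction u; cbn; [reflexivity|congruence]. Qed.

Lemma subst_term_scons_shift t u : subst_term (scons t var) (subst_term shift u) = u.
Proof.
  rewrite subst_term_comp, (subst_term_ext _ var); [apply subst_term_id | reflexivity].
Qed.

Lemma up_comp s t k : subst_term (up t) (up s k) = up (subst_comp s t) k.
Proof.
  destruct k as [|k]; cbn; [reflexivity|].
  unfold subst_comp. rewrite !subst_term_comp. apply subst_term_ext. reflexivity.
Qed.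

Lemma subst_form_ext p : forall s t, (forall k, s k = t k) -> subst_form s p = subst_form t p.
Proof.
  induction p; intros s1 s2 H; cbn; f_equal; auto using subst_term_ext.
  apply IHp. intros [|k]; cbn; [reflexivity|]. now rewrite H.
Qed.

Lemma subst_form_comp p : forall s t, subst_form t (subst_form s p) = subst_form (subst_comp s t) p.
Proof.
  induction p; intros s1 s2; cbn; f_equal; auto using subst_term_comp.
  rewrite IHp. apply subst_form_ext, up_comp.
Qed.

Lemma subst_form_id p : subst_form var p = p.
Proof.
  enough (forall s, (forall k, s k = var k) -> subst_form s p = p) by auto.
  induction p; intros s H; cbn; f_equal; auto.
  - rewrite (subst_term_ext _ var); auto using subst_term_id.
  - rewrite (subst_term_ext _ var); auto using subst_term_id.
  - apply IHp. intros [|k]; cbn; [reflexivity|]. now rewrite H.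
Qed.

Lemma subst_form_up_shift s q :
  subst_form (up s) (subst_form shift q) = subst_form shift (subst_form s q).
Proof. rewrite !subst_form_comp. apply subst_form_ext. reflexivity. Qed.

Lemma inst_subst s t p :
  subst_form s (inst t p) = inst (subst_term s t) (subst_form (up s) p).
Proof.
  unfold inst. rewrite !subst_form_comp. apply subst_form_ext.
  intros [|k]; unfold subst_comp; cbn; [reflexivity|].
  now rewrite subst_term_scons_shift.
Qed.

Lemma subst_form_scons_up t s p :
  inst t (subst_form (up s) p) = subst_form (scons t s) p.
Proof.
  unfold inst. rewrite subst_form_comp. apply subst_form_ext.
  intros [|k]; unfold subst_comp; cbn; [reflexivity|]. apply subst_term_scons_shift.
Qed.

Lemma bounded_term_mono n m t : bounded_term n t -> n <= m -> bounded_term m t.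
Proof. induction t; cbn; intuition lia. Qed.

Lemma bounded_form_mono p : forall n m, bounded_form n p -> n <= m -> bounded_form m p.
Proof.
  induction p; cbn; intros n m H Hle; intuition eauto using bounded_term_mono.
  eapply IHp; eauto; lia.
Qed.

Lemma bounded_term_ext n t s1 s2 : bounded_term n t -> (forall k, k < n -> s1 k = s2 k) ->
  subst_term s1 t = subst_term s2 t.
Proof. induction t; cbn; intuition; f_equal; auto. Qed.

Lemma bounded_form_ext p : forall n s1 s2, bounded_form n p ->
  (forall k, k < n -> s1 k = s2 k) -> subst_form s1 p = subst_form s2 p.
Proof.
  induction p; cbn; intros n s1 s2 Hb H; f_equal; intuition eauto using bounded_term_ext.
  eapply IHp; eauto. intros [|k] Hk; cbn; [reflexivity|]. rewrite H; auto; lia.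
Qed.

Lemma bounded_term_subst n m t s : bounded_term n t ->
  (forall k, k < n -> bounded_term m (s k)) -> bounded_term m (subst_term s t).
Proof. induction t; cbn; intuition. Qed.

Lemma bounded_form_subst p : forall n m s, bounded_form n p ->
  (forall k, k < n -> bounded_term m (s k)) -> bounded_form m (subst_form s p).
Proof.
  induction p; cbn; intros n m s Hb H; intuition eauto using bounded_term_subst.
  eapply IHp; eauto. intros [|k] Hk; cbn; [lia|].
  eapply bounded_term_subst; [apply H; lia|]. cbn. lia.
Qed.

Lemma bounded_AllN n : forall k p, bounded_form (k + n) p -> bounded_form k (AllN n p).
Proof.
  induction n; intros k p H; cbn.
  - now rewrite Nat.add_0_r in H.
  - apply IHn. now replace (S k + n) with (k + S n) by lia.
Qed.

Fixpoint term_bound (t : term) : nat :=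
  match t with var n => S n | fn _ a b => max (term_bound a) (term_bound b) end.

Fixpoint form_bound (p : form) : nat :=
  match p with
  | Eq a b => max (term_bound a) (term_bound b)
  | Bot => 0
  | Imp p q => max (form_bound p) (form_bound q)
  | All p => pred (form_bound p)
  end.

Lemma bounded_term_bound t : bounded_term (term_bound t) t.
Proof. induction t; cbn; [lia|]. split; eapply bounded_term_mono; eauto; lia. Qed.

Lemma bounded_form_bound p : bounded_form (form_bound p) p.
Proof.
  induction p; cbn; auto.
  - split; eapply bounded_term_mono; eauto using bounded_term_bound; lia.
  - split; eapply bounded_form_mono; eauto; lia.
  - eapply bounded_form_mono; eauto; lia.
Qed.

Fixpoint bounded_termb (n : nat) (t : term) : bool :=
  match t with
  | var k => Nat.ltb k n
  | fn _ a b => bounded_termb n a && bounded_termb n b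
  end.

Fixpoint bounded_formb (n : nat) (p : form) : bool :=
  match p with
  | Eq a b => bounded_termb n a && bounded_termb n b
  | Bot => true
  | Imp p q => bounded_formb n p && bounded_formb n q
  | All p => bounded_formb (S n) p
  end.

Lemma bounded_termb_sound n t : bounded_termb n t = true -> bounded_term n t.
Proof. induction t; cbn; [apply Nat.ltb_lt|]. rewrite Bool.andb_true_iff; intuition. Qed.

Lemma bounded_formb_sound p : forall n, bounded_formb n p = true -> bounded_form n p.
Proof.
  induction p; cbn; intros n; rewrite ?Bool.andb_true_iff;
    intuition eauto using bounded_termb_sound.
Qed.

Lemma nd_weaken A p : nd A p -> forall B, incl A B -> nd B p.
Proof.
  induction 1; intros B HB.
  - apply ndCtx; auto.
  - apply ndII, IHnd, incl_cons; [left; auto | intros x Hx; right; auto].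
  - eapply ndIE; eauto.
  - apply ndAllI, IHnd, incl_map; auto.
  - apply ndAllE; auto.
  - apply ndExp; auto.
  - apply ndPeirce.
  - apply ndRefl.
  - eapply ndLeib; eauto.
Qed.

Lemma nd_subst A p : nd A p -> forall sg, nd (map (subst_form sg) A) (subst_form sg p).
Proof.
  induction 1; intros sg; cbn.
  - apply ndCtx, in_map; auto.
  - apply ndII, (IHnd sg).
  - eapply ndIE; [apply (IHnd1 sg) | apply (IHnd2 sg)].
  - apply ndAllI. specialize (IHnd (up sg)). rewrite map_map in IHnd |- *.
    erewrite map_ext; [exact IHnd|]. intros q; cbn. now rewrite subst_form_up_shift.
  - rewrite inst_subst. apply ndAllE, (IHnd sg).
  - apply ndExp, (IHnd sg).
  - apply ndPeirce.
  - apply ndRefl.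
  - rewrite inst_subst. eapply ndLeib; [apply (IHnd1 sg)|]. rewrite <- inst_subst. apply (IHnd2 sg).
Qed.

Lemma nd_AllI_fresh A p x : (forall q, In q A -> bounded_form x q) -> bounded_form x (All p) ->
  nd A (inst (var x) p) -> nd A (All p).
Proof.
  intros HA Hp H.
  set (s := fun k => if Nat.eqb k x then var 0 else var (S k)).
  apply ndAllI.
  replace (map (subst_form shift) A) with (map (subst_form s) A).
  2:{ apply map_ext_in. intros q Hq. eapply bounded_form_ext; [apply HA; auto|].
      intros k Hk. unfold s. destruct (Nat.eqb_spec k x); [lia|reflexivity]. }
  enough (Heq : subst_form s (inst (var x) p) = p) by (rewrite <- Heq; apply nd_subst, H).
  unfold inst. rewrite subst_form_comp. rewrite <- (subst_form_id p) at 2.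
  eapply bounded_form_ext; [exact Hp|]. intros [|k] Hk; unfold subst_comp, s; cbn.
  - now rewrite Nat.eqb_refl.
  - destruct (Nat.eqb_spec k x); [lia|reflexivity].
Qed.

Lemma nd_head A p : nd (p :: A) p.
Proof. apply ndCtx; left; auto. Qed.

Lemma nd_cons A p q : nd A p -> nd (q :: A) p.
Proof. intros H; eapply nd_weaken; eauto. intros x; right; auto. Qed.

Lemma nd_dne A p : nd A (Neg (Neg p)) -> nd A p.
Proof.
  intros H. eapply ndIE; [apply (ndPeirce A p Bot)|].
  apply ndII, ndExp. eapply ndIE; [apply nd_cons, H | apply nd_head].
Qed.

Lemma nd_neg_imp_hyp A p q : nd A (Neg (Imp p q)) -> nd A p.
Proof.
  intros H. apply nd_dne, ndII. eapply ndIE; [apply nd_cons, H|].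
  apply ndII, ndExp. eapply ndIE; [apply nd_cons, nd_head | apply nd_head].
Qed.

Lemma nd_neg_imp_concl A p q : nd A (Neg (Imp p q)) -> nd A (Neg q).
Proof.
  intros H. apply ndII. eapply ndIE; [apply nd_cons, H|]. apply ndII, nd_cons, nd_head.
Qed.

Definition consistent (T : form -> Prop) : Prop := ~ provable T Bot.

Definition extend (T : form -> Prop) (p : form) : form -> Prop := fun q => T q \/ q = p.

Lemma provable_mono (T T' : form -> Prop) p :
  (forall q, T q -> T' q) -> provable T p -> provable T' p.
Proof. intros H [A [HA HB]]. exists A; split; auto. Qed.

Lemma provable_axiom (T : form -> Prop) p : T p -> provable T p.
Proof. intros H. exists [p]. split; [intros q [->|[]]; auto | apply nd_head]. Qed.

Lemma provable_combine (T : form -> Prop) p q r :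
  (forall A, nd A p -> nd A q -> nd A r) -> provable T p -> provable T q -> provable T r.
Proof.
  intros Hr [A [HA H1]] [B [HB H2]]. exists (A ++ B). split.
  - intros s Hs. apply in_app_or in Hs. intuition.
  - apply Hr; eapply nd_weaken; eauto; intros s Hs; apply in_or_app; auto.
Qed.

Lemma provable_mp (T : form -> Prop) p q :
  provable T (Imp p q) -> provable T p -> provable T q.
Proof. apply provable_combine. intros A. apply ndIE. Qed.

Lemma provable_leib (T : form -> Prop) s t p :
  provable T (Eq s t) -> provable T (inst s p) -> provable T (inst t p).
Proof. apply provable_combine. intros A. apply ndLeib. Qed.

Lemma extend_split (T : form -> Prop) p A : (forall q, In q A -> extend T p q) ->
  exists A', (forall q, In q A' -> T q) /\ incl A (p :: A').
Proof.
  induction A as [|a A IH]; intros H.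
  - exists []. split; [intros q [] | intros x []].
  - destruct IH as [A' [H1 H2]]; [intros q Hq; apply H; right; auto|].
    destruct (H a (or_introl eq_refl)) as [Ha| ->].
    + exists (a :: A'). split; [intros q [<-|Hq]; auto|].
      intros x [<-|Hx]; [right; left; auto|].
      destruct (H2 x Hx) as [<-|Hx']; [left | right; right]; auto.
    + exists A'. split; auto. intros x [<-|Hx]; [left|]; auto.
Qed.

Lemma provable_deduction (T : form -> Prop) p q :
  provable (extend T p) q -> provable T (Imp p q).
Proof.
  intros [A [HA H]]. destruct (extend_split T p A HA) as [A' [H1 H2]].
  exists A'. split; auto. apply ndII. eapply nd_weaken; eauto.
Qed.

Lemma provable_refute (T : form -> Prop) p :
  provable (extend T (Neg p)) Bot -> provable T p.
Proof.
  intros H. apply provable_deduction in H as [A [HA H]].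
  exists A. split; auto. apply nd_dne, H.
Qed.

Section Semantics.
Variable D : Type.
Variable I : fsym -> D -> D -> D.

Fixpoint eval (r : nat -> D) (t : term) : D :=
  match t with var n => r n | fn f a b => I f (eval r a) (eval r b) end.

Definition dcons (d : D) (r : nat -> D) (n : nat) : D :=
  match n with 0 => d | S k => r k end.

Fixpoint sat (r : nat -> D) (p : form) : Prop :=
  match p with
  | Eq a b => eval r a = eval r b
  | Bot => False
  | Imp p q => sat r p -> sat r q
  | All p => forall d, sat (dcons d r) p
  end.

Lemma eval_subst r s t : eval r (subst_term s t) = eval (fun k => eval r (s k)) t.
Proof. induction t; cbn; congruence. Qed.

Lemma sat_subst p : forall r s, sat r (subst_form s p) <-> sat (fun k => eval r (s k)) p.
Proof.
  induction p; intros r s; cbn.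
  - rewrite !eval_subst. tauto.
  - tauto.
  - rewrite IHp1, IHp2. tauto.
  - assert (E : forall d, (fun k => eval (dcons d r) (up s k)) = dcons d (fun k => eval r (s k))).
    { intros d. apply functional_extensionality. intros [|k]; cbn; [reflexivity|].
      apply eval_subst. }
    split; intros H d; specialize (H d); rewrite IHp, E in *; exact H.
Qed.

Lemma eval_ext n t r1 r2 : bounded_term n t -> (forall k, k < n -> r1 k = r2 k) ->
  eval r1 t = eval r2 t.
Proof. induction t; cbn; intuition; f_equal; auto. Qed.

Lemma sat_ext p : forall n r1 r2, bounded_form n p -> (forall k, k < n -> r1 k = r2 k) ->
  (sat r1 p <-> sat r2 p).
Proof.
  induction p; cbn; intros n r1 r2 Hb H.
  - destruct Hb. rewrite (eval_ext n t r1 r2), (eval_ext n t0 r1 r2); auto. tauto.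
  - tauto.
  - destruct Hb. rewrite (IHp1 n r1 r2), (IHp2 n r1 r2); auto. tauto.
  - assert (Hd : forall d k, k < S n -> dcons d r1 k = dcons d r2 k).
    { intros d [|k] Hk; cbn; auto. apply H. lia. }
    split; intros H1 d; [rewrite <- (IHp (S n) (dcons d r1)) | rewrite (IHp (S n) (dcons d r1))];
      auto.
Qed.

Lemma sat_And r p q : sat r (And p q) <-> sat r p /\ sat r q.
Proof. cbn. tauto. Qed.

Lemma sat_Ex r p : sat r (Ex p) <-> exists d, sat (dcons d r) p.
Proof.
  cbn. split.
  - intros H. apply NNPP. intros H1. apply H. intros d Hd. apply H1. eauto.
  - intros [d Hd] H. eapply H; eauto.
Qed.

Lemma sat_AllN n : forall r p, sat r (AllN n p) ->
  forall r', sat (fun k => if k <? n then r' k else r (k - n)) p.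
Proof.
  induction n; intros r p H r'; cbn [AllN] in *.
  - replace (fun k => _) with r; auto.
    apply functional_extensionality; intros k. now rewrite Nat.sub_0_r.
  - specialize (IHn _ _ (H (r' n)) r').
    replace (fun k => _) with (fun k => if k <? n then r' k else dcons (r' n) r (k - n)); auto.
    apply functional_extensionality; intros k.
    destruct (Nat.ltb_spec k n), (Nat.ltb_spec k (S n)); try lia; auto.
    + replace k with n by lia. now rewrite Nat.sub_diag.
    + destruct (k - n) eqn:E; [lia|]. cbn. f_equal. lia.
Qed.

(* Formulas over the derived connectives, whose satisfaction unfolds by computation
   to the corresponding Rocq connectives. *)
Inductive xform : Type :=
| xEq : term -> term -> xform
| xImp : xform -> xform -> xform
| xAnd : xform -> xform -> xform
| xOr : xform -> xform -> xform
| xAll : xform -> xform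
| xEx : xform -> xform.

Fixpoint xform_form (p : xform) : form :=
  match p with
  | xEq a b => Eq a b
  | xImp p q => Imp (xform_form p) (xform_form q)
  | xAnd p q => And (xform_form p) (xform_form q)
  | xOr p q => Imp (Neg (xform_form p)) (xform_form q)
  | xAll p => All (xform_form p)
  | xEx p => Ex (xform_form p)
  end.

Fixpoint xsat (r : nat -> D) (p : xform) : Prop :=
  match p with
  | xEq a b => eval r a = eval r b
  | xImp p q => xsat r p -> xsat r q
  | xAnd p q => xsat r p /\ xsat r q
  | xOr p q => xsat r p \/ xsat r q
  | xAll p => forall d, xsat (dcons d r) p
  | xEx p => exists d, xsat (dcons d r) p
  end.

Lemma sat_xform_form p : forall r, sat r (xform_form p) <-> xsat r p.
Proof.
  induction p; intros r; cbn [xform_form xsat].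
  - cbn; tauto.
  - cbn. rewrite IHp1, IHp2. tauto.
  - rewrite sat_And, IHp1, IHp2. tauto.
  - cbn. rewrite IHp1, IHp2. tauto.
  - cbn. split; intros H d; apply IHp; auto.
  - rewrite sat_Ex. split; intros [d Hd]; exists d; apply IHp; auto.
Qed.

Definition models (T : form -> Prop) : Prop :=
  forall p, T p -> bounded_form 0 p -> forall r, sat r p.

End Semantics.

Arguments eval {D} I r t.
Arguments sat {D} I r p.
Arguments xsat {D} I r p.
Arguments dcons {D} d r n.
Arguments models {D} I T.

(** * Completeness *)

Definition fsym_code (f : fsym) : nat :=
  match f with Add => 0 | Mul => 1 | Add' => 2 | Mul' => 3 end.

Lemma fsym_code_inj f g : fsym_code f = fsym_code g -> f = g.
Proof. destruct f, g; cbn; congruence. Qed.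

Lemma to_nat_inj a b : Cantor.to_nat a = Cantor.to_nat b -> a = b.
Proof. intros H. rewrite <- (Cantor.cancel_of_to a), <- (Cantor.cancel_of_to b). congruence. Qed.

Fixpoint encode_term (t : term) : nat :=
  match t with
  | var n => Cantor.to_nat (0, n)
  | fn f a b => Cantor.to_nat (S (fsym_code f), Cantor.to_nat (encode_term a, encode_term b))
  end.

Fixpoint encode_form (p : form) : nat :=
  match p with
  | Eq a b => Cantor.to_nat (0, Cantor.to_nat (encode_term a, encode_term b))
  | Bot => Cantor.to_nat (1, 0)
  | Imp p q => Cantor.to_nat (2, Cantor.to_nat (encode_form p, encode_form q))
  | All p => Cantor.to_nat (3, encode_form p)
  end.

Opaque Cantor.to_nat.

Lemma encode_term_inj t : forall u, encode_term t = encode_term u -> t = u.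
Proof.
  induction t; intros [m|g u1 u2]; cbn [encode_term]; intros H;
    apply to_nat_inj in H; try congruence.
  injection H as H1 H2. apply to_nat_inj in H2. injection H2 as H2 H3.
  apply fsym_code_inj in H1. f_equal; auto.
Qed.

Lemma encode_form_inj p : forall q, encode_form p = encode_form q -> p = q.
Proof.
  induction p; intros [a b| |q1 q2|q]; cbn [encode_form]; intros H;
    apply to_nat_inj in H; try congruence.
  - injection H as H. apply to_nat_inj in H. injection H as H1 H2.
    f_equal; apply encode_term_inj; auto.
  - injection H as H. apply to_nat_inj in H. injection H as H1 H2. f_equal; auto.
  - injection H as H. f_equal; auto.
Qed.

Definition decode_form (n : nat) : form :=
  match excluded_middle_informative (exists p, encode_form p = n) with
  | left H => proj1_sig (constructive_indefinite_description _ H)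
  | right _ => Bot
  end.

Lemma decode_encode_form p : decode_form (encode_form p) = p.
Proof.
  unfold decode_form. destruct excluded_middle_informative as [H|H].
  - destruct constructive_indefinite_description as [q Hq]. apply encode_form_inj; auto.
  - exfalso; eauto.
Qed.

Section Completeness.
Variable T : form -> Prop.
Variable phi : form.
Hypothesis phi_closed : bounded_form 0 phi.
Hypothesis phi_unprovable : ~ provable T phi.

Definition Tneg : form -> Prop := fun p => (T p /\ bounded_form 0 p) \/ p = Neg phi.

Lemma Tneg_closed p : Tneg p -> bounded_form 0 p.
Proof. intros [[_ H]| ->]; cbn; auto. Qed.

Lemma Tneg_consistent : consistent Tneg.
Proof.
  intros H. apply phi_unprovable.
  apply (provable_mono (fun p => T p /\ bounded_form 0 p)); [intros q [Hq _]; auto|].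
  apply provable_refute. eapply provable_mono; [|exact H]. intros q [Hq|Hq]; [left|right]; auto.
Qed.

(* The witness variable of the [n]-th formula lies above the free variables of all
   formulas decoded so far and above all earlier witnesses, so it is fresh for them. *)
Fixpoint witness (n : nat) : nat :=
  match n with
  | 0 => form_bound (decode_form 0)
  | S k => S (witness k) + form_bound (decode_form (S k))
  end.

Lemma form_bound_le_witness n : form_bound (decode_form n) <= witness n.
Proof. destruct n; cbn; lia. Qed.

Lemma witness_lt k n : k < n -> witness k < witness n.
Proof.
  induction n; intros H; [lia|]. cbn.
  destruct (Nat.eq_dec k n); subst; [lia|]. specialize (IHn ltac:(lia)). lia.
Qed.

Definition henkin_axiom (n : nat) : form :=
  Imp (inst (var (witness n)) (decode_form n)) (All (decode_form n)).

Lemma henkin_axiom_bounded n : bounded_form (S (witness n)) (henkin_axiom n).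
Proof.
  pose proof (form_bound_le_witness n). cbn. split.
  - eapply bounded_form_subst; [apply bounded_form_bound|]. intros [|k] Hk; cbn; lia.
  - eapply bounded_form_mono; [apply bounded_form_bound | lia].
Qed.

Definition Thenkin_upto (N : nat) : form -> Prop :=
  fun p => Tneg p \/ exists k, k < N /\ p = henkin_axiom k.

(* [henkin_axiom N] is refutable only if its antecedent is provable and its conclusion
   refutable; the witness is fresh, so generalizing the antecedent gives a contradiction. *)
Lemma Thenkin_upto_consistent N : consistent (Thenkin_upto N).
Proof.
  induction N.
  - intros H. apply Tneg_consistent. eapply provable_mono; [|exact H].
    intros q [Hq|[k [Hk _]]]; [auto | lia].
  - intros H. apply IHN.
    assert (H1 : provable (extend (Thenkin_upto N) (henkin_axiom N)) Bot).
    { eapply provable_mono; [|exact H]. intros q [Hq|[k [Hk ->]]]; [left; left; auto|].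
      destruct (Nat.eq_dec k N); [subst; right; auto | left; right; exists k; split; auto; lia]. }
    apply provable_deduction in H1 as [A [HA H1]].
    exists A. split; auto.
    eapply ndIE; [exact (nd_neg_imp_concl _ _ _ H1)|].
    apply (nd_AllI_fresh _ _ (witness N)); [| |exact (nd_neg_imp_hyp _ _ _ H1)].
    + intros q Hq. destruct (HA q Hq) as [Hq'|[k [Hk ->]]].
      * eapply bounded_form_mono; [apply Tneg_closed; auto | lia].
      * eapply bounded_form_mono; [apply henkin_axiom_bounded|].
        pose proof (witness_lt k N Hk); lia.
    + cbn. eapply bounded_form_mono; [apply bounded_form_bound|].
      pose proof (form_bound_le_witness N); lia.
Qed.

Definition Thenkin : form -> Prop := fun p => Tneg p \/ exists k, p = henkin_axiom k.

Lemma Thenkin_consistent : consistent Thenkin.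
Proof.
  intros [A [HA HA_bot]].
  assert (exists N, forall q, In q A -> Thenkin_upto N q) as [N HN].
  { clear HA_bot. induction A as [|a A IH]; [exists 0; intros q []|].
    destruct IH as [N HN]; [intros q Hq; apply HA; right; auto|].
    destruct (HA a (or_introl eq_refl)) as [Ha|[k ->]].
    - exists N. intros q [<-|Hq]; auto. left; auto.
    - exists (S (max N k)). intros q [<-|Hq]; [right; exists k; split; auto; lia|].
      destruct (HN q Hq) as [H1|[j [Hj ->]]]; [left; auto | right; exists j; split; auto; lia]. }
  apply (Thenkin_upto_consistent N). exists A; split; auto.
Qed.

Fixpoint Tmax_upto (n : nat) : form -> Prop :=
  match n with
  | 0 => Thenkin
  | S k => if excluded_middle_informative (consistent (extend (Tmax_upto k) (decode_form k)))
           then extend (Tmax_upto k) (decode_form k)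
           else extend (Tmax_upto k) (Neg (decode_form k))
  end.

Lemma Tmax_upto_mono k n p : k <= n -> Tmax_upto k p -> Tmax_upto n p.
Proof.
  induction 1 as [|n _ IH]; auto. intros Hp. cbn.
  destruct excluded_middle_informative; left; auto.
Qed.

Lemma Tmax_upto_consistent n : consistent (Tmax_upto n).
Proof.
  induction n; [apply Thenkin_consistent|]. cbn.
  destruct excluded_middle_informative as [H|H]; auto.
  intros H1. apply IHn. apply NNPP in H.
  apply provable_deduction in H, H1. eapply provable_mp; eauto.
Qed.

Definition Tmax : form -> Prop := fun p => exists n, Tmax_upto n p.

Lemma Tmax_consistent : consistent Tmax.
Proof.
  intros [A [HA HA_bot]].
  assert (exists n, forall q, In q A -> Tmax_upto n q) as [n Hn].
  { clear HA_bot. induction A as [|a A IH]; [exists 0; intros q []|].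
    destruct IH as [N HN]; [intros q Hq; apply HA; right; auto|].
    destruct (HA a (or_introl eq_refl)) as [k Hk].
    exists (max N k). intros q [<-|Hq].
    - eapply (Tmax_upto_mono k); eauto; lia.
    - eapply (Tmax_upto_mono N); eauto; lia. }
  apply (Tmax_upto_consistent n). exists A. auto.
Qed.

Lemma Tmax_complete p : provable Tmax p \/ provable Tmax (Neg p).
Proof.
  assert (Tmax_upto (S (encode_form p)) p \/ Tmax_upto (S (encode_form p)) (Neg p)) as [H|H].
  { cbn. rewrite decode_encode_form.
    destruct excluded_middle_informative; [left|right]; right; auto. }
  - left. apply provable_axiom. eexists; eauto.
  - right. apply provable_axiom. eexists; eauto.
Qed.

Lemma Tmax_henkin n : provable Tmax (henkin_axiom n).
Proof. apply provable_axiom. exists 0. right. eauto. Qed.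

Lemma Tmax_Tneg p : Tneg p -> provable Tmax p.
Proof. intros H. apply provable_axiom. exists 0. left. auto. Qed.

Definition prov_eq (s t : term) : Prop := provable Tmax (Eq s t).

Lemma prov_eq_refl t : prov_eq t t.
Proof. exists []. split; [intros q [] | apply ndRefl]. Qed.

Lemma prov_eq_sym s t : prov_eq s t -> prov_eq t s.
Proof.
  intros H. pose proof (provable_leib _ s t (Eq (var 0) (subst_term shift s)) H) as H1.
  unfold inst in H1; cbn in H1. rewrite !subst_term_scons_shift in H1. apply H1, prov_eq_refl.
Qed.

Lemma prov_eq_trans r s t : prov_eq r s -> prov_eq s t -> prov_eq r t.
Proof.
  intros H1 H2. pose proof (provable_leib _ s t (Eq (subst_term shift r) (var 0)) H2) as H.
  unfold inst in H; cbn in H. rewrite !subst_term_scons_shift in H. apply H, H1.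
Qed.

Lemma prov_eq_fn f s1 s2 t1 t2 :
  prov_eq s1 s2 -> prov_eq t1 t2 -> prov_eq (fn f s1 t1) (fn f s2 t2).
Proof.
  intros H1 H2.
  pose proof (provable_leib _ s1 s2 (Eq (fn f (subst_term shift s1) (subst_term shift t1))
    (fn f (var 0) (subst_term shift t1))) H1) as H.
  pose proof (provable_leib _ t1 t2 (Eq (fn f (subst_term shift s1) (subst_term shift t1))
    (fn f (subst_term shift s2) (var 0))) H2) as H'.
  unfold inst in H, H'; cbn in H, H'.
  rewrite !subst_term_scons_shift in H. rewrite !subst_term_scons_shift in H'.
  apply H', H, prov_eq_refl.
Qed.

(* The term model: classes of terms modulo provable equality in [Tmax], each class
   represented by its defining predicate. *)
Definition term_class : Type := {P : term -> Prop | exists t, P = prov_eq t}.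

Definition class_of (t : term) : term_class := exist _ (prov_eq t) (ex_intro _ t eq_refl).

Definition class_repr (d : term_class) : term :=
  proj1_sig (constructive_indefinite_description _ (proj2_sig d)).

Lemma class_of_repr d : class_of (class_repr d) = d.
Proof.
  destruct d as [P HP]. unfold class_repr, class_of. cbn.
  destruct constructive_indefinite_description as [t Ht]. cbn. subst P.
  f_equal. apply proof_irrelevance.
Qed.

Lemma class_of_eq s t : class_of s = class_of t <-> prov_eq s t.
Proof.
  split.
  - intros H. apply (f_equal (fun d => proj1_sig d t)) in H. cbn in H.
    rewrite H. apply prov_eq_refl.
  - intros H. unfold class_of.
    assert (E : prov_eq s = prov_eq t).
    { apply functional_extensionality; intros u. apply propositional_extensionality.
      split; eauto using prov_eq_trans, prov_eq_sym. }
    generalize (ex_intro (fun u => prov_eq s = prov_eq u) s eq_refl).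
    rewrite E. intros e. f_equal. apply proof_irrelevance.
Qed.

Lemma prov_eq_repr t : prov_eq (class_repr (class_of t)) t.
Proof. apply class_of_eq, class_of_repr. Qed.

Definition class_interp (f : fsym) (d1 d2 : term_class) : term_class :=
  class_of (fn f (class_repr d1) (class_repr d2)).

Lemma eval_class_of s t : eval class_interp (fun k => class_of (s k)) t = class_of (subst_term s t).
Proof.
  induction t; cbn; [reflexivity|]. rewrite IHt1, IHt2. apply class_of_eq.
  apply prov_eq_fn; apply prov_eq_repr.
Qed.

Lemma dcons_class_of t s :
  dcons (class_of t) (fun k => class_of (s k)) = fun k => class_of (scons t s k).
Proof. apply functional_extensionality; intros [|k]; reflexivity. Qed.

(* Truth lemma: maximality handles [Imp], the Henkin axioms handle [All]. *)
Lemma term_model_truth p : forall s,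
  sat class_interp (fun k => class_of (s k)) p <-> provable Tmax (subst_form s p).
Proof.
  induction p; intros s; cbn.
  - rewrite !eval_class_of. apply class_of_eq.
  - split; [tauto | apply Tmax_consistent].
  - rewrite IHp1, IHp2. split.
    + intros H. destruct (Tmax_complete (subst_form s p1)) as [H1|[A [HA H1]]].
      * destruct (H H1) as [A [HA H2]]. exists A; split; auto. apply ndII, nd_cons, H2.
      * exists A; split; auto. apply ndII, ndExp.
        eapply ndIE; [apply nd_cons, H1 | apply nd_head].
    + intros H1 H2. eapply provable_mp; eauto.
  - split.
    + intros H. set (n := encode_form (subst_form (up s) p)).
      pose proof (Tmax_henkin n) as Hn. unfold henkin_axiom, n in Hn.
      rewrite decode_encode_form in Hn. eapply provable_mp; [exact Hn|].
      specialize (H (class_of (var (witness n)))).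
      rewrite dcons_class_of, IHp in H. now rewrite subst_form_scons_up.
    + intros [A [HA H]] d. rewrite <- (class_of_repr d), dcons_class_of, IHp.
      exists A; split; auto. rewrite <- subst_form_scons_up. apply ndAllE, H.
Qed.

Lemma term_model_models : models class_interp T.
Proof.
  intros psi H1 H2 r. apply (sat_ext _ _ psi 0 (fun k => class_of (var k))); [auto | lia|].
  apply term_model_truth. rewrite subst_form_id. apply Tmax_Tneg. left. auto.
Qed.

Lemma term_model_refutes : ~ sat class_interp (fun k => class_of (var k)) phi.
Proof.
  intros Hphi.
  assert (H : sat class_interp (fun k => class_of (var k)) (Neg phi)).
  { apply term_model_truth. rewrite subst_form_id. apply Tmax_Tneg. right. reflexivity. }
  exact (H Hphi).
Qed.

End Completeness.

Theorem completeness (T : form -> Prop) (phi : form) : bounded_form 0 phi ->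
  (forall (D : Type) (I : fsym -> D -> D -> D), models I T -> forall r, sat I r phi) ->
  provable T phi.
Proof.
  intros Hc H. apply NNPP. intros Hn.
  apply (term_model_refutes T phi Hc Hn), H, term_model_models; auto.
Qed.

(** * Models of Peano arithmetic *)

Ltac closed := apply bounded_formb_sound; reflexivity.

(* Formulas with named binders: [Lv l] is the variable bound by the binder at nesting
   level [l], [Fv j] is the free variable [j], and a builder is applied to the number
   of binders above it.  Satisfaction of a built formula computes to the Rocq
   proposition it describes. *)
Definition tm := nat -> term.
Definition fm := nat -> xform.
Definition Lv (l : nat) : tm := fun d => var (d - S l).
Definition Fv (j : nat) : tm := fun d => var (d + j).
Definition Op (f : fsym) (s t : tm) : tm := fun d => fn f (s d) (t d).
Definition EQ (s t : tm) : fm := fun d => xEq (s d) (t d).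
Definition IMP (p q : fm) : fm := fun d => xImp (p d) (q d).
Definition AND (p q : fm) : fm := fun d => xAnd (p d) (q d).
Definition OR (p q : fm) : fm := fun d => xOr (p d) (q d).
Definition ALL (k : nat -> fm) : fm := fun d => xAll (k d (S d)).
Definition EX (k : nat -> fm) : fm := fun d => xEx (k d (S d)).

Definition pleq {D} (I : fsym -> D -> D -> D) (a : fsym) (x y : D) : Prop :=
  exists k, I a x k = y.

Definition leF (a : fsym) (x y : tm) : fm := EX (fun k => EQ (Op a x (Lv k)) y).

Record peano_structure {D : Type} (I : fsym -> D -> D -> D) (a m : fsym) (z e : D) : Prop := {
  ps_models : models I (Peano_ax a m);
  ps_zero : forall x, I a x z = x /\ I a z x = x;
  ps_one : forall x, I m x e = x /\ I m e x = x }.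

Arguments ps_models {D I a m z e}.
Arguments ps_zero {D I a m z e}.
Arguments ps_one {D I a m z e}.

Lemma peano_structure_exists {D} (I : fsym -> D -> D -> D) a m :
  models I (Peano_ax a m) -> D -> exists z e, peano_structure I a m z e.
Proof.
  intros HP d.
  assert (Hz := HP _ (PAzero a m) ltac:(closed) (fun _ => d)).
  assert (He := HP _ (PAone a m) ltac:(closed) (fun _ => d)).
  apply sat_Ex in Hz as [z Hz]. apply sat_Ex in He as [e He].
  exists z, e. split; auto; intros x.
  - specialize (Hz x). apply sat_And in Hz. exact Hz.
  - specialize (He x). apply sat_And in He. exact He.
Qed.

Section PeanoAxioms.
Context {D : Type} {I : fsym -> D -> D -> D} {A M : fsym} {z e : D}.
Hypothesis PM : peano_structure I A M z e.

Local Notation "x +_ y" := (I A x y) (at level 50, left associativity).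
Local Notation "x *_ y" := (I M x y) (at level 40, left associativity).

Lemma sat_With01 r body : sat I r (With01 A M body) -> sat I (dcons e (dcons z r)) body.
Proof.
  intros H. apply (H z e).
  - intros x. apply sat_And, (ps_zero PM x).
  - intros x. apply sat_And, (ps_one PM x).
Qed.

Lemma ps_With01 body : Peano_ax A M (With01 A M body) -> bounded_form 0 (With01 A M body) ->
  sat I (dcons e (dcons z (fun _ => z))) body.
Proof. intros Hax Hc. apply sat_With01, (ps_models PM _ Hax Hc). Qed.

Lemma ps_succ_neq_0 x : x +_ e <> z.
Proof. exact (ps_With01 _ (PAsnz A M) ltac:(closed) x). Qed.

Lemma ps_succ_inj x y : x +_ e = y +_ e -> x = y.
Proof. exact (ps_With01 _ (PAsinj A M) ltac:(closed) x y). Qed.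

Lemma ps_add_succ_r x y : x +_ (y +_ e) = (x +_ y) +_ e.
Proof. exact (ps_With01 _ (PAadd A M) ltac:(closed) x y). Qed.

Lemma ps_mul_0_r x : x *_ z = z.
Proof. exact (ps_With01 _ (PAmul0 A M) ltac:(closed) x). Qed.

Lemma ps_mul_succ_r x y : x *_ (y +_ e) = (x *_ y) +_ x.
Proof. exact (ps_With01 _ (PAmulS A M) ltac:(closed) x y). Qed.

Lemma ps_induction n p r (Q : D -> Prop) : bounded_form (S n) p ->
  (forall y, sat I (dcons y r) p <-> Q y) -> Q z -> (forall y, Q y -> Q (y +_ e)) ->
  forall y, Q y.
Proof.
  intros Hb HQ H0 HS.
  assert (Hc : bounded_form 0 (PA_ind A M n p)).
  { apply bounded_AllN. cbn -[subst_form].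
    repeat split; try lia; eapply bounded_form_subst; eauto; intros [|k] Hk; cbn; lia. }
  pose proof (sat_AllN D I n _ _ (ps_models PM _ (PAind A M n p) Hc (fun _ => z)) r) as H.
  set (r' := fun k => if k <? n then r k else z) in H.
  apply sat_With01 in H.
  assert (Hr : forall y, sat I (dcons y r') p <-> Q y).
  { intros y. rewrite <- HQ. apply (sat_ext _ _ p (S n)); auto.
    intros [|k] Hk; cbn; auto. unfold r'. destruct (Nat.ltb_spec k n); [reflexivity | lia]. }
  assert (Ey : forall y, (fun k => eval I (dcons y (dcons e (dcons z r'))) (ind_y k)) = dcons y r').
  { intros y; apply functional_extensionality.
    intros [|k]; cbn; [|rewrite Nat.add_comm]; reflexivity. }
  intros y. rewrite <- Hr, <- Ey, <- sat_subst. apply H, sat_And. split.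
  - rewrite sat_subst.
    replace (fun k => _) with (dcons z r'); [apply Hr, H0|].
    apply functional_extensionality; intros [|k]; cbn; [|rewrite Nat.add_comm]; reflexivity.
  - intros d. cbn [sat]. rewrite !sat_subst, Ey.
    replace (fun k => eval I _ (ind_y1 A k)) with (dcons (d +_ e) r').
    + rewrite !Hr. apply HS.
    + apply functional_extensionality; intros [|k]; cbn; [|rewrite Nat.add_comm]; reflexivity.
Qed.

Lemma ps_induction_xform n (p : fm) (l : list D) (Q : D -> Prop) :
  bounded_formb (S n) (xform_form (p 0)) = true ->
  (forall y, xsat I (dcons y (fun k => nth k l z)) (p 0) <-> Q y) ->
  Q z -> (forall y, Q y -> Q (y +_ e)) -> forall y, Q y.
Proof.
  intros Hb HQ. apply (ps_induction n (xform_form (p 0)) (fun k => nth k l z)).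
  - apply bounded_formb_sound, Hb.
  - intros y. rewrite sat_xform_form. apply HQ.
Qed.

End PeanoAxioms.

(* [peano_induction PM n p l] proves a goal [forall y, Q y] by induction, where [p]
   expresses [Q y] with [Fv 0] standing for [y] and [Fv (k + 1)] for the [k]-th of the
   [n] elements of [l]; both facts are checked by computation. *)
Ltac peano_induction PM n p l :=
  refine (ps_induction_xform PM n p l _ _ _ _ _); [reflexivity | intros ?; reflexivity | |].

Section PeanoArithmetic.
Context {D : Type} {I : fsym -> D -> D -> D} {A M : fsym} {z e : D}.
Hypothesis PM : peano_structure I A M z e.

Local Notation "x +_ y" := (I A x y) (at level 50, left associativity).
Local Notation "x *_ y" := (I M x y) (at level 40, left associativity).
Local Notation "x ≤ y" := (pleq I A x y) (at level 70).
Local Notation "s ⊕ t" := (Op A s t) (at level 50, left associativity).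
Local Notation "s ⊗ t" := (Op M s t) (at level 40, left associativity).

Lemma ps_add_0_r x : x +_ z = x. Proof. apply (ps_zero PM). Qed.
Lemma ps_add_0_l x : z +_ x = x. Proof. apply (ps_zero PM). Qed.
Lemma ps_mul_1_l x : e *_ x = x. Proof. apply (ps_one PM). Qed.

Lemma ps_add_assoc x y c : x +_ y +_ c = x +_ (y +_ c).
Proof.
  revert c. peano_induction PM 2 (EQ (Fv 1 ⊕ Fv 2 ⊕ Fv 0) (Fv 1 ⊕ (Fv 2 ⊕ Fv 0))) [x; y].
  - now rewrite !ps_add_0_r.
  - intros c IH. now rewrite !(ps_add_succ_r PM), IH.
Qed.

Lemma ps_add_1_comm x : e +_ x = x +_ e.
Proof.
  revert x. peano_induction PM 1 (EQ (Fv 1 ⊕ Fv 0) (Fv 0 ⊕ Fv 1)) [e].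
  - now rewrite ps_add_0_r, ps_add_0_l.
  - intros x IH. now rewrite (ps_add_succ_r PM), IH.
Qed.

Lemma ps_add_comm x y : x +_ y = y +_ x.
Proof.
  revert y. peano_induction PM 1 (EQ (Fv 1 ⊕ Fv 0) (Fv 0 ⊕ Fv 1)) [x].
  - now rewrite ps_add_0_r, ps_add_0_l.
  - intros y IH.
    now rewrite (ps_add_succ_r PM), IH, <- (ps_add_succ_r PM), <- ps_add_1_comm, ps_add_assoc.
Qed.

Lemma ps_mul_add_distr_l x y c : x *_ (y +_ c) = x *_ y +_ x *_ c.
Proof.
  revert c.
  peano_induction PM 2 (EQ (Fv 1 ⊗ (Fv 2 ⊕ Fv 0)) (Fv 1 ⊗ Fv 2 ⊕ Fv 1 ⊗ Fv 0)) [x; y].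
  - now rewrite ps_add_0_r, (ps_mul_0_r PM), ps_add_0_r.
  - intros c IH. now rewrite (ps_add_succ_r PM), !(ps_mul_succ_r PM), IH, ps_add_assoc.
Qed.

Lemma ps_mul_0_l x : z *_ x = z.
Proof.
  revert x. peano_induction PM 1 (EQ (Fv 1 ⊗ Fv 0) (Fv 1)) [z].
  - apply (ps_mul_0_r PM).
  - intros x IH. now rewrite (ps_mul_succ_r PM), IH, ps_add_0_r.
Qed.

Lemma ps_mul_succ_l x y : (x +_ e) *_ y = x *_ y +_ y.
Proof.
  revert y. peano_induction PM 2 (EQ ((Fv 1 ⊕ Fv 2) ⊗ Fv 0) (Fv 1 ⊗ Fv 0 ⊕ Fv 0)) [x; e].
  - now rewrite !(ps_mul_0_r PM), ps_add_0_r.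
  - intros y IH. rewrite !(ps_mul_succ_r PM), IH, !ps_add_assoc. f_equal.
    now rewrite <- !ps_add_assoc, (ps_add_comm y x).
Qed.

Lemma ps_mul_comm x y : x *_ y = y *_ x.
Proof.
  revert y. peano_induction PM 1 (EQ (Fv 1 ⊗ Fv 0) (Fv 0 ⊗ Fv 1)) [x].
  - now rewrite (ps_mul_0_r PM), ps_mul_0_l.
  - intros y IH. now rewrite (ps_mul_succ_r PM), ps_mul_succ_l, IH.
Qed.

Lemma ps_mul_assoc x y c : x *_ y *_ c = x *_ (y *_ c).
Proof.
  revert c. peano_induction PM 2 (EQ (Fv 1 ⊗ Fv 2 ⊗ Fv 0) (Fv 1 ⊗ (Fv 2 ⊗ Fv 0))) [x; y].
  - now rewrite !(ps_mul_0_r PM).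
  - intros c IH. now rewrite !(ps_mul_succ_r PM), IH, ps_mul_add_distr_l.
Qed.

Lemma peano_semiring : semi_ring_theory z e (I A) (I M) eq.
Proof.
  constructor; auto using ps_add_0_l, ps_add_comm, ps_mul_1_l, ps_mul_0_l, ps_mul_comm.
  - symmetry; apply ps_add_assoc.
  - symmetry; apply ps_mul_assoc.
  - intros x y c. now rewrite ps_mul_comm, ps_mul_add_distr_l, !(ps_mul_comm c).
Qed.

Add Ring peano_ring : peano_semiring.

Lemma ps_zero_or_succ y : y = z \/ exists p, y = p +_ e.
Proof.
  revert y.
  peano_induction PM 2 (OR (EQ (Fv 0) (Fv 1)) (EX (fun p => EQ (Fv 0) (Lv p ⊕ Fv 2)))) [z; e].
  - now left.
  - intros y _. right. now exists y.
Qed.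

Lemma ps_add_cancel_r c x y : x +_ c = y +_ c -> x = y.
Proof.
  revert c x y.
  peano_induction PM 0
    (ALL (fun x => ALL (fun y => IMP (EQ (Lv x ⊕ Fv 0) (Lv y ⊕ Fv 0)) (EQ (Lv x) (Lv y)))))
    (@nil D).
  - intros x y. now rewrite !ps_add_0_r.
  - intros c IH x y H. rewrite !(ps_add_succ_r PM) in H. apply (ps_succ_inj PM) in H. auto.
Qed.

Lemma ps_add_cancel_l c x y : c +_ x = c +_ y -> x = y.
Proof. rewrite (ps_add_comm c x), (ps_add_comm c y). apply ps_add_cancel_r. Qed.

Lemma ps_add_eq_0 x y : x +_ y = z -> x = z.
Proof.
  intros H. destruct (ps_zero_or_succ y) as [->|[p ->]].
  - now rewrite ps_add_0_r in H.
  - rewrite (ps_add_succ_r PM) in H. now apply (ps_succ_neq_0 PM) in H.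
Qed.

Lemma pleq_refl x : x ≤ x. Proof. exists z. apply ps_add_0_r. Qed.

Lemma pleq_trans x y c : x ≤ y -> y ≤ c -> x ≤ c.
Proof. intros [k <-] [l <-]. exists (k +_ l). ring. Qed.

Lemma pleq_0_l x : z ≤ x. Proof. exists x. apply ps_add_0_l. Qed.
Lemma pleq_add_r x k : x ≤ x +_ k. Proof. now exists k. Qed.
Lemma pleq_succ_r x y : x ≤ y -> x ≤ y +_ e. Proof. intros [k <-]. exists (k +_ e). ring. Qed.
Lemma pleq_succ_l x y : x +_ e ≤ y -> x ≤ y.
Proof. apply pleq_trans, pleq_add_r. Qed.
Lemma pleq_mul_l x y c : x ≤ y -> c *_ x ≤ c *_ y.
Proof. intros [k <-]. exists (c *_ k). ring. Qed.
Lemma pleq_mul_succ x y : y ≤ (x +_ e) *_ y.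
Proof. exists (x *_ y). ring. Qed.

Lemma pleq_0_r x : x ≤ z -> x = z.
Proof. intros [k Hk]. eapply ps_add_eq_0, Hk. Qed.

Lemma pleq_total x y : x ≤ y \/ y ≤ x.
Proof.
  revert y. peano_induction PM 1
    (OR (EX (fun k => EQ (Fv 1 ⊕ Lv k) (Fv 0))) (EX (fun k => EQ (Fv 0 ⊕ Lv k) (Fv 1)))) [x].
  - right. apply pleq_0_l.
  - intros y [[k Hk]|[k Hk]].
    + left. exists (k +_ e). rewrite <- Hk. ring.
    + destruct (ps_zero_or_succ k) as [->|[p ->]].
      * left. exists e. rewrite <- Hk. ring.
      * right. exists p. rewrite <- Hk. ring.
Qed.

Lemma pleq_eq_or_succ x y : x ≤ y -> x = y \/ x +_ e ≤ y.
Proof.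
  intros [k <-]. destruct (ps_zero_or_succ k) as [->|[p ->]].
  - left. ring.
  - right. exists p. ring.
Qed.

Lemma pleq_succ_succ x y : x +_ e ≤ y +_ e -> x ≤ y.
Proof. intros [k Hk]. exists k. apply (ps_add_cancel_r e). rewrite <- Hk. ring. Qed.

Lemma pleq_succ_r_inv x y : x ≤ y +_ e -> x ≤ y \/ x = y +_ e.
Proof.
  intros H. destruct (pleq_eq_or_succ _ _ H) as [->|H1]; [right | left; apply pleq_succ_succ]; auto.
Qed.

Lemma pleq_succ_irrefl x : ~ x +_ e ≤ x.
Proof.
  intros [k Hk]. assert (H : (e +_ k) +_ x = z +_ x).
  { transitivity (x +_ e +_ k); [ring|]. rewrite Hk. ring. }
  apply ps_add_cancel_r in H. rewrite ps_add_comm in H. eapply (ps_succ_neq_0 PM); eauto.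
Qed.

Lemma pleq_succ_l_not x y : x +_ e ≤ y -> ~ y ≤ x.
Proof. intros H1 H2. apply (pleq_succ_irrefl x). eapply pleq_trans; eauto. Qed.

End PeanoArithmetic.

(** * Gödel's beta function *)

Definition beta_modulus {D} (I : fsym -> D -> D -> D) (a m : fsym) (e d i : D) : D :=
  I a e (I m (I a i e) d).

Definition beta_rel {D} (I : fsym -> D -> D -> D) (a m : fsym) (e c d i w : D) : Prop :=
  exists q, c = I a (I m q (beta_modulus I a m e d i)) w /\ pleq I a w (I m (I a i e) d).

Definition pcoprime {D} (I : fsym -> D -> D -> D) (a m : fsym) (e x y : D) : Prop :=
  exists s t, I m s x = I a (I m t y) e.

Definition modulusF (a m : fsym) (E d i : tm) : tm := Op a E (Op m (Op a i E) d).

Definition betaF (a m : fsym) (E c d i w : tm) : fm :=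
  EX (fun q => AND (EQ c (Op a (Op m (Lv q) (modulusF a m E d i)) w))
                   (leF a w (Op m (Op a i E) d))).

Definition coprimeF (a m : fsym) (E x y : tm) : fm :=
  EX (fun s => EX (fun t => EQ (Op m (Lv s) x) (Op a (Op m (Lv t) y) E))).

Section BetaFunction.
Context {D : Type} {I : fsym -> D -> D -> D} {A M : fsym} {z e : D}.
Hypothesis PM : peano_structure I A M z e.

Local Notation "x +_ y" := (I A x y) (at level 50, left associativity).
Local Notation "x *_ y" := (I M x y) (at level 40, left associativity).
Local Notation "x ≤ y" := (pleq I A x y) (at level 70).
Local Notation "s ⊕ t" := (Op A s t) (at level 50, left associativity).
Local Notation "s ⊗ t" := (Op M s t) (at level 40, left associativity).

Add Ring peano_ring : (peano_semiring PM).

Local Notation modulus := (beta_modulus I A M e).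
Local Notation Beta := (beta_rel I A M e).
Local Notation Coprime := (pcoprime I A M e).

Lemma ps_div_exists n c : exists q w, c = q *_ (e +_ n) +_ w /\ w ≤ n.
Proof.
  revert c. peano_induction PM 2
    (EX (fun q => EX (fun w => AND (EQ (Fv 0) (Lv q ⊗ (Fv 2 ⊕ Fv 1) ⊕ Lv w))
                                   (leF A (Lv w) (Fv 1))))) [n; e].
  - exists z, z. split; [ring | apply (pleq_0_l PM)].
  - intros c [q [w [-> Hw]]]. destruct (pleq_eq_or_succ PM _ _ Hw) as [->|Hw'].
    + exists (q +_ e), z. split; [ring | apply (pleq_0_l PM)].
    + exists q, (w +_ e). split; [ring | auto].
Qed.

Lemma ps_rem_unique n q w q' w' :
  q *_ (e +_ n) +_ w = q' *_ (e +_ n) +_ w' -> w ≤ n -> w' ≤ n -> w = w'.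
Proof.
  assert (Hle : forall q w q' w', q *_ (e +_ n) +_ w = q' *_ (e +_ n) +_ w' ->
            w ≤ n -> w' ≤ n -> q ≤ q' -> w = w').
  { intros q1 w1 q2 w2 H Hw Hw' [k <-].
    assert (H1 : q1 *_ (e +_ n) +_ w1 = q1 *_ (e +_ n) +_ (k *_ (e +_ n) +_ w2))
      by (rewrite H; ring).
    apply (ps_add_cancel_l PM) in H1. destruct (ps_zero_or_succ PM k) as [->|[p ->]].
    - rewrite H1. ring.
    - exfalso. apply (pleq_succ_l_not PM n w1); auto.
      exists (p *_ (e +_ n) +_ w2). rewrite H1. ring. }
  intros H Hw Hw'. destruct (pleq_total PM q q'); [eauto|]. symmetry. eauto.
Qed.

Lemma beta_rel_exists c d i : exists w, Beta c d i w.
Proof.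
  destruct (ps_div_exists ((i +_ e) *_ d) c) as [q [w [H1 H2]]]. now exists w, q.
Qed.

Lemma beta_rel_unique c d i w w' : Beta c d i w -> Beta c d i w' -> w = w'.
Proof.
  intros [q [H1 H2]] [q' [H1' H2']].
  apply (ps_rem_unique ((i +_ e) *_ d) q w q' w'); auto.
  unfold beta_modulus in *. congruence.
Qed.

Lemma beta_rel_le c d d' i w : d ≤ d' -> Beta c d i w -> w ≤ (i +_ e) *_ d'.
Proof.
  intros H [q [_ H2]]. eapply (pleq_trans PM); [exact H2|]. apply (pleq_mul_l PM); auto.
Qed.

Lemma beta_rel_add_multiple c d i w L K :
  Beta c d i w -> (exists l, L = modulus d i *_ l) -> Beta (c +_ L *_ K) d i w.
Proof.
  intros [q [H1 H2]] [l ->]. exists (q +_ l *_ K). split; auto.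
  rewrite H1. unfold beta_modulus. ring.
Qed.

Lemma pcoprime_mul_l x1 x2 y : Coprime x1 y -> Coprime x2 y -> Coprime (x1 *_ x2) y.
Proof.
  intros [s1 [t1 H1]] [s2 [t2 H2]]. exists (s1 *_ s2), (t1 *_ t2 *_ y +_ t1 +_ t2).
  transitivity ((s1 *_ x1) *_ (s2 *_ x2)); [ring|]. rewrite H1, H2. ring.
Qed.

(* An explicit Bezout identity, using that [k - i] divides [d]. *)
Lemma beta_modulus_coprime d u i k : (forall r, r ≤ u -> exists g, d = (r +_ e) *_ g) ->
  i +_ e ≤ k -> k ≤ u +_ e -> Coprime (modulus d i) (modulus d k).
Proof.
  intros Hd [r0 Hk] [l Hl]. subst k.
  assert (Hr : r0 ≤ u).
  { exists (i +_ l). apply (ps_add_cancel_r PM e). rewrite <- Hl. ring. }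
  destruct (Hd r0 Hr) as [g Hg].
  unfold pcoprime, beta_modulus.
  set (p := i +_ e). set (r := r0 +_ e).
  exists (e +_ p *_ (p +_ r) *_ (p +_ r) *_ g *_ d), (p *_ g *_ r +_ p *_ p *_ (p +_ r) *_ g *_ d).
  replace (i +_ e +_ r0 +_ e) with (p +_ r) by (unfold p, r; ring).
  rewrite Hg. unfold r. ring.
Qed.

Lemma beta_rel_chinese c L d i w : Coprime L (modulus d i) -> w ≤ (i +_ e) *_ d ->
  exists K, Beta (c +_ L *_ K) d i w.
Proof.
  intros [s [t H]] Hw. set (X := (i +_ e) *_ d).
  exists (s *_ (w +_ c *_ X)), (c +_ t *_ (w +_ c *_ X)). split; auto.
  transitivity (c +_ (s *_ L) *_ (w +_ c *_ X)); [ring|].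
  rewrite H. unfold beta_modulus, X. ring.
Qed.

Lemma ps_common_multiple b n :
  exists d, b ≤ d /\ forall r, r ≤ n -> exists g, d = (r +_ e) *_ g.
Proof.
  revert n. peano_induction PM 2
    (EX (fun d => AND (leF A (Fv 1) (Lv d))
       (ALL (fun r => IMP (leF A (Lv r) (Fv 0))
          (EX (fun g => EQ (Lv d) ((Lv r ⊕ Fv 2) ⊗ Lv g)))))))
    [b; e].
  - exists b. split; [apply (pleq_refl PM)|]. intros r Hr. apply (pleq_0_r PM) in Hr. subst r.
    exists b. ring.
  - intros n [d [H1 H2]]. exists (d *_ (n +_ e +_ e)). split.
    + eapply (pleq_trans PM); [exact H1|]. exists (d *_ (n +_ e)). ring.
    + intros r Hr. destruct (pleq_succ_r_inv PM _ _ Hr) as [Hr' | ->].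
      * destruct (H2 r Hr') as [g ->]. exists (g *_ (n +_ e +_ e)). ring.
      * exists d. ring.
Qed.

(* The first [j + 1] entries of the sequence coded by [(c, d)] are coded again with a
   base [d'] all of whose moduli are pairwise coprime; [L] is a common multiple of the
   moduli used so far and is coprime to the moduli of the entries still free. *)
Lemma beta_recode c d d' u : d ≤ d' -> (forall r, r ≤ u -> exists g, d' = (r +_ e) *_ g) ->
  forall j, j ≤ u -> exists c' L,
    (forall i w, i ≤ j -> Beta c d i w -> Beta c' d' i w) /\
    (forall i, i ≤ j -> exists l, L = modulus d' i *_ l) /\
    (forall k, j +_ e ≤ k -> k ≤ u +_ e -> Coprime L (modulus d' k)).
Proof.
  intros Hdd Hdiv. peano_induction PM 5
    (IMP (leF A (Fv 0) (Fv 4)) (EX (fun c' => EX (fun L => AND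
      (ALL (fun i => ALL (fun w => IMP (leF A (Lv i) (Fv 0))
        (IMP (betaF A M (Fv 5) (Fv 1) (Fv 2) (Lv i) (Lv w))
             (betaF A M (Fv 5) (Lv c') (Fv 3) (Lv i) (Lv w))))))
      (AND (ALL (fun i => IMP (leF A (Lv i) (Fv 0))
             (EX (fun l => EQ (Lv L) (modulusF A M (Fv 5) (Fv 3) (Lv i) ⊗ Lv l)))))
           (ALL (fun k => IMP (leF A (Fv 0 ⊕ Fv 5) (Lv k)) (IMP (leF A (Lv k) (Fv 4 ⊕ Fv 5))
             (coprimeF A M (Fv 5) (Lv L) (modulusF A M (Fv 5) (Fv 3) (Lv k)))))))))))
    [c; d; d'; u; e].
  - intros _. destruct (beta_rel_exists c d z) as [w0 Hw0]. exists w0, (modulus d' z).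
    split; [|split].
    + intros i w Hi Hw. apply (pleq_0_r PM) in Hi. subst i.
      rewrite (beta_rel_unique _ _ _ _ _ Hw Hw0).
      exists z. split; [unfold beta_modulus; ring | eapply beta_rel_le; eauto].
    + intros i Hi. apply (pleq_0_r PM) in Hi. subst i. exists e. ring.
    + intros k Hk1 Hk2. apply (beta_modulus_coprime d' u); auto.
  - intros j IH Hj. destruct IH as [c2 [L [H1 [H2 H3]]]]; [apply (pleq_succ_l PM); auto|].
    destruct (beta_rel_exists c d (j +_ e)) as [w1 Hw1].
    destruct (beta_rel_chinese c2 L d' (j +_ e) w1) as [K HK].
    { apply H3; [apply (pleq_refl PM) | apply (pleq_succ_r PM); auto]. }
    { eapply beta_rel_le; eauto. }
    exists (c2 +_ L *_ K), (L *_ modulus d' (j +_ e)). split; [|split].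
    + intros i w Hi Hw. destruct (pleq_succ_r_inv PM _ _ Hi) as [Hi' | ->].
      * apply beta_rel_add_multiple; auto.
      * now rewrite (beta_rel_unique _ _ _ _ _ Hw Hw1).
    + intros i Hi. destruct (pleq_succ_r_inv PM _ _ Hi) as [Hi' | ->].
      * destruct (H2 i Hi') as [l ->]. exists (l *_ modulus d' (j +_ e)). ring.
      * exists L. ring.
    + intros k Hk1 Hk2. apply pcoprime_mul_l.
      * apply H3; auto. apply (pleq_succ_l PM); auto.
      * apply (beta_modulus_coprime d' u); auto.
Qed.

End BetaFunction.

(** * The isomorphism *)

Definition good_code {D} (I : fsym -> D -> D -> D) (z e z' e' c d u : D) : Prop :=
  beta_rel I Add Mul e c d z z' /\
  forall i w, pleq I Add (I Add i e) u -> beta_rel I Add Mul e c d i w ->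
    beta_rel I Add Mul e c d (I Add i e) (I Add' w e').

Definition theta_rel {D} (I : fsym -> D -> D -> D) (z e z' e' u v : D) : Prop :=
  exists c d, good_code I z e z' e' c d u /\ beta_rel I Add Mul e c d u v.

Definition goodF (Z E Z' E' c d u : tm) : fm :=
  AND (betaF Add Mul E c d Z Z')
      (ALL (fun i => ALL (fun w => IMP (leF Add (Op Add (Lv i) E) u)
        (IMP (betaF Add Mul E c d (Lv i) (Lv w))
             (betaF Add Mul E c d (Op Add (Lv i) E) (Op Add' (Lv w) E')))))).

Definition thetaF (Z E Z' E' u v : tm) : fm :=
  EX (fun c => EX (fun d =>
    AND (goodF Z E Z' E' (Lv c) (Lv d) u) (betaF Add Mul E (Lv c) (Lv d) u v))).

Definition identityF (f : fsym) (Z : tm) : fm :=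
  ALL (fun x => AND (EQ (Op f (Lv x) Z) (Lv x)) (EQ (Op f Z (Lv x)) (Lv x))).

(* The vocabulary has no constants, so [0], [1], [0'], [1'] are quantified over. *)
Definition theta : form :=
  xform_form (EX (fun z => EX (fun e => EX (fun z' => EX (fun e' =>
    AND (identityF Add (Lv z)) (AND (identityF Mul (Lv e))
      (AND (identityF Add' (Lv z')) (AND (identityF Mul' (Lv e'))
        (thetaF (Lv z) (Lv e) (Lv z') (Lv e') (Fv 0) (Fv 1))))))))) 0).

Lemma theta_bounded : bounded_form 2 theta.
Proof. closed. Qed.

Lemma sat_theta {D} (I : fsym -> D -> D -> D) r : sat I r theta <->
  exists z e z' e', (forall x, I Add x z = x /\ I Add z x = x) /\
    (forall x, I Mul x e = x /\ I Mul e x = x) /\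
    (forall x, I Add' x z' = x /\ I Add' z' x = x) /\
    (forall x, I Mul' x e' = x /\ I Mul' e' x = x) /\
    theta_rel I z e z' e' (r 0) (r 1).
Proof. unfold theta. rewrite sat_xform_form. reflexivity. Qed.

Section Isomorphism.
Context {D : Type} {I : fsym -> D -> D -> D} {z e z' e' : D}.
Hypothesis PM1 : peano_structure I Add Mul z e.
Hypothesis PM2 : peano_structure I Add' Mul' z' e'.

Local Notation "x +_ y" := (I Add x y) (at level 50, left associativity).
Local Notation "x *_ y" := (I Mul x y) (at level 40, left associativity).
Local Notation "x +' y" := (I Add' x y) (at level 50, left associativity).
Local Notation "x *' y" := (I Mul' x y) (at level 40, left associativity).
Local Notation "x ≤ y" := (pleq I Add x y) (at level 70).
Local Notation Beta := (beta_rel I Add Mul e).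
Local Notation Theta := (theta_rel I z e z' e').
Local Notation ThetaF u v := (thetaF (Fv 1) (Fv 2) (Fv 3) (Fv 4) u v).

Add Ring peano_ring1 : (peano_semiring PM1).

Lemma theta_rel_zero : Theta z z'.
Proof.
  assert (Hb : Beta z' z' z z').
  { exists z. split; [unfold beta_modulus; ring | exists z; ring]. }
  exists z', z'. split; [split|]; auto.
  intros i w Hi _. apply (pleq_0_r PM1) in Hi. now apply (ps_succ_neq_0 PM1) in Hi.
Qed.

(* To append [v +' 1'] to a code of length [u + 1] we pass to a base [d'] whose
   moduli are pairwise coprime and large enough for [v +' 1'], re-code the old entries
   and fix the new one by the Chinese remainder theorem. *)
Lemma theta_rel_succ u v : Theta u v -> Theta (u +_ e) (v +' e').
Proof.
  intros [c [d [[Hc0 Hcs] Hv]]].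
  destruct (ps_common_multiple PM1 (d +_ (v +' e')) u) as [d' [Hd' Hdiv]].
  assert (Hdd : d ≤ d') by (eapply (pleq_trans PM1); [apply pleq_add_r | exact Hd']).
  assert (HW : v +' e' ≤ d')
    by (apply (pleq_trans PM1 _ (d +_ (v +' e'))); [exists d; ring | exact Hd']).
  destruct (beta_recode PM1 c d d' u Hdd Hdiv u (pleq_refl PM1 u)) as [c2 [L [H1 [H2 H3]]]].
  destruct (beta_rel_chinese PM1 c2 L d' (u +_ e) (v +' e')) as [K HK].
  { apply H3; apply (pleq_refl PM1). }
  { eapply (pleq_trans PM1); [exact HW | apply (pleq_mul_succ PM1)]. }
  assert (Hkeep : forall i w, i ≤ u -> Beta c d i w -> Beta (c2 +_ L *_ K) d' i w).
  { intros i w Hi Hw. apply (beta_rel_add_multiple PM1); [apply H1 | apply H2]; auto. }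
  exists (c2 +_ L *_ K), d'. split; [split|exact HK].
  - apply Hkeep; [apply (pleq_0_l PM1) | exact Hc0].
  - intros i w Hi Hw. apply (pleq_succ_succ PM1) in Hi.
    destruct (beta_rel_exists PM1 c d i) as [wi Hwi].
    rewrite (beta_rel_unique PM1 _ _ _ _ _ Hw (Hkeep _ _ Hi Hwi)).
    destruct (pleq_eq_or_succ PM1 i u Hi) as [-> | Hlt].
    + now rewrite (beta_rel_unique PM1 _ _ _ _ _ Hwi Hv).
    + apply Hkeep; auto.
Qed.

Lemma theta_rel_zero_inv v : Theta z v -> v = z'.
Proof. intros [c [d [[H0 _] Hv]]]. eapply (beta_rel_unique PM1); eauto. Qed.

Lemma theta_rel_succ_inv u y : Theta (u +_ e) y -> exists b, Theta u b /\ y = b +' e'.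
Proof.
  intros [c [d [[H0 Hs] Hy]]]. destruct (beta_rel_exists PM1 c d u) as [b Hb]. exists b. split.
  - exists c, d. split; [split|]; auto.
    intros i w Hi Hw. apply Hs; auto. apply (pleq_succ_r PM1); auto.
  - eapply (beta_rel_unique PM1); [exact Hy|]. apply Hs; auto. apply (pleq_refl PM1).
Qed.

Lemma theta_rel_zero_inv_r x : Theta x z' -> x = z.
Proof.
  intros H. destruct (ps_zero_or_succ PM1 x) as [->|[p ->]]; auto.
  apply theta_rel_succ_inv in H as [b [_ Hb]]. symmetry in Hb.
  now apply (ps_succ_neq_0 PM2) in Hb.
Qed.

Lemma theta_rel_functional u v v' : Theta u v -> Theta u v' -> v = v'.
Proof.
  revert u v v'. peano_induction PM1 4
    (ALL (fun v => ALL (fun v' =>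
      IMP (ThetaF (Fv 0) (Lv v)) (IMP (ThetaF (Fv 0) (Lv v')) (EQ (Lv v) (Lv v'))))))
    [z; e; z'; e'].
  - intros v v' H1 H2. now rewrite (theta_rel_zero_inv _ H1), (theta_rel_zero_inv _ H2).
  - intros u IH v v' H1 H2.
    apply theta_rel_succ_inv in H1 as [b [Hb ->]], H2 as [b' [Hb' ->]].
    now rewrite (IH b b').
Qed.

Lemma theta_rel_total u : exists v, Theta u v.
Proof.
  revert u. peano_induction PM1 4 (EX (fun v => ThetaF (Fv 0) (Lv v))) [z; e; z'; e'].
  - exists z'. apply theta_rel_zero.
  - intros u [v Hv]. exists (v +' e'). now apply theta_rel_succ.
Qed.

Lemma theta_rel_surjective v : exists u, Theta u v.
Proof.
  revert v. peano_induction PM2 4 (EX (fun u => ThetaF (Lv u) (Fv 0))) [z; e; z'; e'].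
  - exists z. apply theta_rel_zero.
  - intros v [u Hu]. exists (u +_ e). now apply theta_rel_succ.
Qed.

Lemma theta_rel_injective x x' y : Theta x y -> Theta x' y -> x = x'.
Proof.
  revert x x' y. peano_induction PM1 4
    (ALL (fun x' => ALL (fun y =>
      IMP (ThetaF (Fv 0) (Lv y)) (IMP (ThetaF (Lv x') (Lv y)) (EQ (Fv 0) (Lv x'))))))
    [z; e; z'; e'].
  - intros x' y H1 H2. rewrite (theta_rel_zero_inv _ H1) in H2.
    symmetry. now apply theta_rel_zero_inv_r.
  - intros x IH x' y H1 H2. apply theta_rel_succ_inv in H1 as [b [Hb ->]].
    destruct (ps_zero_or_succ PM1 x') as [->|[p ->]].
    + apply theta_rel_zero_inv in H2. now apply (ps_succ_neq_0 PM2) in H2.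
    + apply theta_rel_succ_inv in H2 as [b' [Hb' Hbb]].
      apply (ps_succ_inj PM2) in Hbb. subst b'. now rewrite (IH p b).
Qed.

Lemma theta_rel_add x x' y y' : Theta x x' -> Theta y y' -> Theta (x +_ y) (x' +' y').
Proof.
  revert y x x' y'. peano_induction PM1 4
    (ALL (fun x => ALL (fun x' => ALL (fun y' =>
      IMP (ThetaF (Lv x) (Lv x')) (IMP (ThetaF (Fv 0) (Lv y'))
        (ThetaF (Op Add (Lv x) (Fv 0)) (Op Add' (Lv x') (Lv y'))))))))
    [z; e; z'; e'].
  - intros x x' y' Hx Hy. rewrite (theta_rel_zero_inv _ Hy), (ps_add_0_r PM2).
    now replace (x +_ z) with x by ring.
  - intros y IH x x' y' Hx Hy. apply theta_rel_succ_inv in Hy as [b [Hb ->]].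
    rewrite (ps_add_succ_r PM2). replace (x +_ (y +_ e)) with (x +_ y +_ e) by ring.
    apply theta_rel_succ, IH; auto.
Qed.

Lemma theta_rel_mul x x' y y' : Theta x x' -> Theta y y' -> Theta (x *_ y) (x' *' y').
Proof.
  revert y x x' y'. peano_induction PM1 4
    (ALL (fun x => ALL (fun x' => ALL (fun y' =>
      IMP (ThetaF (Lv x) (Lv x')) (IMP (ThetaF (Fv 0) (Lv y'))
        (ThetaF (Op Mul (Lv x) (Fv 0)) (Op Mul' (Lv x') (Lv y'))))))))
    [z; e; z'; e'].
  - intros x x' y' Hx Hy. rewrite (theta_rel_zero_inv _ Hy), (ps_mul_0_r PM2).
    replace (x *_ z) with z by ring. apply theta_rel_zero.
  - intros y IH x x' y' Hx Hy. apply theta_rel_succ_inv in Hy as [b [Hb ->]].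
    rewrite (ps_mul_succ_r PM2). replace (x *_ (y +_ e)) with (x *_ y +_ x) by ring.
    apply theta_rel_add; auto.
Qed.

Lemma identity_unique (f : fsym) (u u' : D) :
  (forall x, I f x u = x /\ I f u x = x) -> (forall x, I f x u' = x /\ I f u' x = x) -> u' = u.
Proof. intros H H'. now rewrite <- (proj2 (H u')), (proj1 (H' u)). Qed.

Lemma sat_theta_at r s t : sat I r (theta_at theta s t) <-> Theta (eval I r s) (eval I r t).
Proof.
  unfold theta_at. rewrite sat_subst, sat_theta. cbn [scons eval]. split.
  - intros [z1 [e1 [z1' [e1' [H1 [H2 [H3 [H4 H5]]]]]]]].
    rewrite (identity_unique _ _ _ (ps_zero PM1) H1), (identity_unique _ _ _ (ps_one PM1) H2),
      (identity_unique _ _ _ (ps_zero PM2) H3), (identity_unique _ _ _ (ps_one PM2) H4) in H5.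
    exact H5.
  - intros H. exists z, e, z', e'.
    exact (conj (ps_zero PM1) (conj (ps_one PM1) (conj (ps_zero PM2) (conj (ps_one PM2) H)))).
Qed.

Lemma sat_ISOM_theta r : sat I r (ISOM theta).
Proof.
  unfold ISOM. cbv zeta. rewrite !sat_And. split; [|split; [|split; [|split]]].
  - intros u. apply sat_Ex. destruct (theta_rel_total u) as [v Hv].
    exists v. now apply sat_theta_at.
  - intros x y1 y2 H. apply sat_And in H as [H1 H2]. rewrite sat_theta_at in H1, H2.
    eapply theta_rel_functional; eauto.
  - intros x1 x2 y H. apply sat_And in H as [H1 H2]. rewrite sat_theta_at in H1, H2.
    eapply theta_rel_injective; eauto.
  - intros v. apply sat_Ex. destruct (theta_rel_surjective v) as [u Hu].
    exists u. now apply sat_theta_at.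
  - intros x y x' y' H. apply sat_And in H as [H1 H2]. rewrite sat_theta_at in H1, H2.
    apply sat_And. split; apply sat_theta_at; cbn [eval dcons].
    + now apply theta_rel_add.
    + now apply theta_rel_mul.
Qed.

End Isomorphism.

Lemma ISOM_theta_valid {D} (I : fsym -> D -> D -> D) :
  models I (fun p => Peano_ax Add Mul p \/ Peano_ax Add' Mul' p) -> forall r, sat I r (ISOM theta).
Proof.
  intros HT r.
  destruct (peano_structure_exists I Add Mul) as [z [e PM1]];
    [intros p Hp; apply HT; auto | exact (r 0)|].
  destruct (peano_structure_exists I Add' Mul') as [z' [e' PM2]];
    [intros p Hp; apply HT; auto | exact (r 0)|].
  exact (sat_ISOM_theta PM1 PM2 r).
Qed.

Theorem mainTheorem4 :
  exists theta : form,
    bounded_form 2 theta /\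
    provable (fun p => Peano_ax Add Mul p \/ Peano_ax Add' Mul' p) (ISOM theta).
Proof.
  exists theta. split; [apply theta_bounded|].
  apply completeness; [closed|]. intros D I HT. apply ISOM_theta_valid, HT.
Qed.
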